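(* Let $S$ be an infinite commutative domain satisfying conditions (1) and (2) below, with a first-order structure expanding its ring structure. Extend the language by two unary predicate symbols $P_1,P_2$, and for $A,B\subseteq S$ let $S_{A,B}$ be the expansion in which $P_1$ is interpreted as $A$ and $P_2$ as $B$. Then there exists a first-order sentence $\Psi$ in this extended language such that: (i) if $A\subseteq B$ then $S_{A,B}\models\Psi$; (ii) if $A$ is finite and $B\subseteq S$ is arbitrary, then $S_{A,B}\models\Psi$ iff $|A|\le|B|$; (iii) if $A$ is infinite and $B$ is finite, then $S_{A,B}\not\models\Psi$. (1) For every finite $A\subseteq S$ there is $x\in S$, neither zero nor a unit, with $(x)+(a_i)=S$ for all $a_i\in A\setminus\{0\}$. (2) For every finite $A\subseteq S$ with $0\notin A$ and every $a\in S$ neither zero nor a unit, there is $g\in S$ such that each $1+a_ig$ ($a_i\in A$) is neither zero nor a unit, $(a)+(1+a_ig)=S$ for all $a_i\in A$, and $(1+a_ig)+(1+a_jg)=S$ for distinct $a_i,a_j\in A$. *)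

From HB Require Import structures.
From mathcomp Require Import all_boot all_order all_algebra.
Set Implicit Arguments. Unset Strict Implicit. Unset Printing Implicit Defensive.
Import Order.TTheory GRing.Theory Num.Theory.
Local Open Scope ring_scope.

(* Language: ring symbols 0,1,+,-,* ; extra function symbols F and extra
   relation symbols Rl (the arbitrary expansion of the ring structure);
   and the two new unary predicate symbols P1, P2. *)
Inductive term (F : Type) : Type :=
  | Tvar of nat
  | T0 | T1
  | Tadd of term F & term F
  | Topp of term F
  | Tmul of term F & term F
  | Tapp of F & list (term F).

Inductive formula (F Rl : Type) : Type :=
  | Fbot
  | Feq of term F & term F
  | Frel of Rl & list (term F)
  | FP1 of term F
  | FP2 of term F
  | Fnot of formula F Rl
  | Fand of formula F Rl & formula F Rl
  | For of formula F Rl & formula F Rl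
  | Fimp of formula F Rl & formula F Rl
  | Fall of nat & formula F Rl
  | Fex of nat & formula F Rl.

Arguments Tvar {F}. Arguments T0 {F}. Arguments T1 {F}.
Arguments Fbot {F Rl}.

Fixpoint tfv (F : Type) (t : term F) : seq nat :=
  match t with
  | Tvar n => [:: n]
  | T0 | T1 => [::]
  | Tadd t u | Tmul t u => tfv t ++ tfv u
  | Topp t => tfv t
  | Tapp _ ts => flatten (map (@tfv F) ts)
  end.

Fixpoint ffv (F Rl : Type) (p : formula F Rl) : seq nat :=
  match p with
  | Fbot => [::]
  | Feq t u => tfv t ++ tfv u
  | Frel _ ts => flatten (map (@tfv F) ts)
  | FP1 t | FP2 t => tfv t
  | Fnot q => ffv q
  | Fand q r | For q r | Fimp q r => ffv q ++ ffv r
  | Fall n q | Fex n q => filter (fun m => m != n) (ffv q)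
  end.

Definition sentence (F Rl : Type) (p : formula F Rl) : Prop := ffv p = [::].

Section Semantics.
Variables (S : idomainType) (F Rl : Type).
Variables (fI : F -> seq S -> S) (rI : Rl -> seq S -> Prop).

Fixpoint teval (e : nat -> S) (t : term F) : S :=
  match t with
  | Tvar n => e n
  | T0 => 0
  | T1 => 1
  | Tadd t u => teval e t + teval e u
  | Topp t => - teval e t
  | Tmul t u => teval e t * teval e u
  | Tapp f ts => fI f (map (teval e) ts)
  end.

Definition upd (e : nat -> S) (n : nat) (x : S) : nat -> S :=
  fun m => if m == n then x else e m.

Fixpoint holds (A B : S -> Prop) (e : nat -> S) (p : formula F Rl) : Prop :=
  match p with
  | Fbot => False
  | Feq t u => teval e t = teval e u
  | Frel r ts => rI r (map (teval e) ts)
  | FP1 t => A (teval e t)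
  | FP2 t => B (teval e t)
  | Fnot q => ~ holds A B e q
  | Fand q r => holds A B e q /\ holds A B e r
  | For q r => holds A B e q \/ holds A B e r
  | Fimp q r => holds A B e q -> holds A B e r
  | Fall n q => forall x : S, holds A B (upd e n x) q
  | Fex n q => exists x : S, holds A B (upd e n x) q
  end.

(* S_{A,B} |= p, for a sentence p (valuation irrelevant; we use the constant 0 one). *)
Definition models (A B : S -> Prop) (p : formula F Rl) : Prop :=
  holds A B (fun _ => 0) p.
End Semantics.

Definition finite_set (T : eqType) (A : T -> Prop) : Prop :=
  exists s : seq T, forall x, A x <-> x \in s.

Definition infinite_type (T : eqType) : Prop :=
  forall s : seq T, exists x : T, x \notin s.

Definition card_le (T : Type) (A B : T -> Prop) : Prop :=
  exists f : T -> T, (forall x, A x -> B (f x)) /\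
    (forall x y, A x -> A y -> f x = f y -> x = y).

Definition comaximal (S : idomainType) (x y : S) : Prop :=
  exists u v : S, u * x + v * y = 1.

Definition nonzero_nonunit (S : idomainType) (x : S) : Prop :=
  x != 0 /\ x \isn't a GRing.unit.

(* Condition (1); a finite subset of S is given by a list enumerating it. *)
Definition cond1 (S : idomainType) : Prop :=
  forall A : seq S, exists x : S, nonzero_nonunit x /\
    forall a, a \in A -> a != 0 -> comaximal x a.

Definition cond2 (S : idomainType) : Prop :=
  forall (A : seq S) (a : S), 0 \notin A -> nonzero_nonunit a ->
    exists g : S,
      (forall ai, ai \in A -> nonzero_nonunit (1 + ai * g) /\ comaximal a (1 + ai * g)) /\
      (forall ai aj, ai \in A -> aj \in A -> ai != aj ->
         comaximal (1 + ai * g) (1 + aj * g)).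

From mathcomp Require Import all_boot all_order all_algebra.
From mathcomp Require Import ring.
From Stdlib Require Import ClassicalEpsilon.
Set Implicit Arguments. Unset Strict Implicit. Unset Printing Implicit Defensive.
Import Order.TTheory GRing.Theory Num.Theory.
Local Open Scope ring_scope.

(* Psi says: either A is contained in B, or for some parameters e, g, k, d the
   relation "y codes x", i.e. q(y) := 1 + (y + k) g divides x - e but not d,
   relates every x in A to some y in B and no y in B codes two elements of A;
   choosing a code for each x then gives an injection of A into B.
   Conversely, given a finite A and an injection f of A into B, let d be the
   product of the differences of distinct elements of A and m a nonzero
   nonunit (condition (1)).  As S is infinite, k can be chosen so that all
   f x + k are nonzero; condition (2), applied to them and to d m, yields g
   such that the q(f x) are pairwise comaximal nonunits comaximal with d,
   hence not dividing d, and the Chinese remainder theorem gives e with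
   x = e mod q(f x).  If q(y) coded x and x', it would divide x - x' and so d.
   An infinite set injects into no finite one. *)

Arguments Feq {F Rl}. Arguments FP1 {F Rl}. Arguments FP2 {F Rl}.
Arguments Fnot {F Rl}. Arguments Fand {F Rl}. Arguments For {F Rl}.
Arguments Fimp {F Rl}. Arguments Fall {F Rl}. Arguments Fex {F Rl}.
Arguments Tadd {F}. Arguments Tmul {F}. Arguments Topp {F}.

(* Variable numbering: 0, 1 stand for elements x, x' of P1 and 2 for an
   element y of P2; 3, 4, 5, 6 are the parameters e, g, k, d; 7 is bound by
   the divisibility formula. *)
Section CodingSentence.
Variables F Rl : Type.

Definition Fdvd (t s : term F) : formula F Rl :=
  Fex 7 (Feq s (Tmul (Tvar 7) t)).

Definition code_modulus : term F :=
  Tadd T1 (Tmul (Tadd (Tvar 2) (Tvar 5)) (Tvar 4)).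

Definition Fcodes (n : nat) : formula F Rl :=
  Fand (Fnot (Fdvd code_modulus (Tvar 6)))
       (Fdvd code_modulus (Tadd (Tvar n) (Topp (Tvar 3)))).

Definition Fcodes_total : formula F Rl :=
  Fall 0 (Fimp (FP1 (Tvar 0)) (Fex 2 (Fand (FP2 (Tvar 2)) (Fcodes 0)))).

Definition Fcodes_inj : formula F Rl :=
  Fall 0 (Fall 1 (Fall 2 (Fimp (FP1 (Tvar 0)) (Fimp (FP1 (Tvar 1))
    (Fimp (FP2 (Tvar 2)) (Fimp (Fcodes 0) (Fimp (Fcodes 1)
      (Feq (Tvar 0) (Tvar 1))))))))).

Definition Psi : formula F Rl :=
  For (Fall 0 (Fimp (FP1 (Tvar 0)) (FP2 (Tvar 0))))
      (Fex 3 (Fex 4 (Fex 5 (Fex 6 (Fand Fcodes_total Fcodes_inj))))).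

Lemma Psi_sentence : sentence Psi.
Proof. by []. Qed.

End CodingSentence.

Definition divides (S : idomainType) (a b : S) : Prop := exists w, b = w * a.

Definition codes (S : idomainType) (e g k d x y : S) : Prop :=
  ~ divides (1 + (y + k) * g) d /\ divides (1 + (y + k) * g) (x - e).

Lemma models_PsiE (S : idomainType) (F Rl : Type)
    (fI : F -> seq S -> S) (rI : Rl -> seq S -> Prop) (A B : S -> Prop) :
  models fI rI A B (Psi F Rl) <->
  (forall x, A x -> B x) \/ exists e g k d,
    (forall x, A x -> exists y, B y /\ codes e g k d x y) /\
    (forall x x' y, A x -> A x' -> B y ->
       codes e g k d x y -> codes e g k d x' y -> x = x').
Proof. by []. Qed.

Lemma card_le_rel (T : Type) (A B : T -> Prop) (R : T -> T -> Prop) :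
  (forall x, A x -> exists y, B y /\ R x y) ->
  (forall x x' y, A x -> A x' -> B y -> R x y -> R x' y -> x = x') ->
  card_le A B.
Proof.
move=> R_total R_inj.
pose f x := epsilon (inhabits x) (fun y => B y /\ R x y).
have fP x : A x -> B (f x) /\ R x (f x).
  move=> Ax; exact: (epsilon_spec (inhabits x) (fun y => B y /\ R x y) (R_total x Ax)).
exists f; split=> [x /fP[] //|x x' Ax Ax' fxx'].
have [Bfx Rx] := fP x Ax; have [_ Rx'] := fP x' Ax'.
by apply: (R_inj x x' (f x)); rewrite // fxx'.
Qed.

Lemma card_le_finite (T : eqType) (A B : T -> Prop) :
  card_le A B -> finite_set B -> finite_set A.
Proof.
move=> [f [fAB f_inj]] [t tB].
pose g y := epsilon (inhabits y) (fun x => A x /\ f x = y).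
pose inA x : bool := if excluded_middle_informative (A x) then true else false.
have inAP x : inA x <-> A x by rewrite /inA; case: excluded_middle_informative.
exists [seq x <- map g t | inA x] => x; rewrite mem_filter; split; last first.
  by case/andP=> /inAP.
move=> Ax; apply/andP; split; first exact/inAP.
have [Agfx fgfx] : A (g (f x)) /\ f (g (f x)) = f x.
  exact: (epsilon_spec (inhabits (f x)) (fun x' => A x' /\ f x' = f x)
           (ex_intro _ x (conj Ax erefl))).
by rewrite -(f_inj _ _ Agfx Ax fgfx); apply/map_f/tB/fAB.
Qed.

Section Comaximal.
Variable S : idomainType.
Implicit Types a b c d q : S.

Lemma divides_trans a b c : divides a b -> divides b c -> divides a c.
Proof. by move=> [w1 ->] [w2 ->]; exists (w2 * w1); rewrite mulrA. Qed.

Lemma divides_mulr a b c : divides a b -> divides a (b * c).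
Proof. by move=> [w ->]; exists (w * c); ring. Qed.

Lemma divides_prod (I : eqType) (r : seq I) (M : I -> S) i :
  i \in r -> divides (M i) (\prod_(j <- r) M j).
Proof.
by move=> ri; rewrite (big_rem i ri) /=; exists (\prod_(j <- rem i r) M j); ring.
Qed.

Lemma comaximalM a b c : comaximal a b -> comaximal a c -> comaximal a (b * c).
Proof.
move=> [u1 [v1 H1]] [u2 [v2 H2]].
exists (u1 * u2 * a + u1 * v2 * c + v1 * b * u2), (v1 * v2).
by rewrite -[1]mulr1 -{1}H1 -H2; ring.
Qed.

Lemma comaximal_prod (I : eqType) (r : seq I) (M : I -> S) a :
  (forall i, i \in r -> comaximal a (M i)) -> comaximal a (\prod_(i <- r) M i).
Proof.
elim: r => [|i r IHr] Hr; first by rewrite big_nil; exists 0, 1; ring.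
rewrite big_cons; apply: comaximalM; first by apply: Hr; rewrite mem_head.
by apply: IHr => j rj; apply: Hr; rewrite inE rj orbT.
Qed.

Lemma comaximal_divides_unit d q : comaximal d q -> divides q d -> q \is a GRing.unit.
Proof.
move=> [u [v H]] [w Hw]; apply/unitrP; exists (u * w + v).
by rewrite -H Hw; split; ring.
Qed.

Lemma chinese_seq (I : eqType) (r : seq I) (M R : I -> S) : uniq r ->
  (forall i j, i \in r -> j \in r -> i != j -> comaximal (M i) (M j)) ->
  exists e, forall i, i \in r -> divides (M i) (R i - e).
Proof.
elim: r => [|i r IHr] /=; first by exists 0.
case/andP=> ri r_uniq M_comax.
have [e' He'] : exists e, forall j, j \in r -> divides (M j) (R j - e).
  by apply: IHr => // j j' rj rj' jj'; apply: M_comax; rewrite ?inE ?rj ?rj' ?orbT.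
set P := \prod_(j <- r) M j.
have [u [v Huv]] : comaximal (M i) P.
  apply: comaximal_prod => j rj; apply: M_comax; rewrite ?mem_head ?inE ?rj ?orbT //.
  by apply: contraNneq ri => ->.
exists (e' + (R i - e') * v * P) => j; rewrite inE.
case/predU1P=> [->|rj].
  exists ((R i - e') * u).
  by transitivity ((R i - e') * (u * M i + v * P) - (R i - e') * v * P);
    [rewrite Huv|]; ring.
have [w1 Hw1] := He' j rj; have [w2 Hw2] : divides (M j) P := divides_prod M rj.
exists (w1 - (R i - e') * v * w2).
by rewrite opprD addrA Hw1 -mulrA -mulrA Hw2; ring.
Qed.

Lemma comaximal_ndivides a b q :
  comaximal (a * b) q -> q \isn't a GRing.unit -> ~ divides q a.
Proof.
move=> comax_abq qNU /(divides_mulr b) qab.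
by case/negP: qNU; exact: comaximal_divides_unit qab.
Qed.

Lemma exists_differences_multiple (s : seq S) :
  exists2 d, d != 0 & forall x x', x \in s -> x' \in s -> x != x' -> divides (x - x') d.
Proof.
exists (\prod_(x <- s) \prod_(x' <- s | x' != x) (x - x')).
  rewrite prodf_seq_neq0; apply/allP => x _ /=; rewrite prodf_seq_neq0.
  by apply/allP => x' _ /=; apply/implyP; rewrite subr_eq0 eq_sym.
move=> x x' sx sx' xx'; apply: divides_trans (divides_prod _ sx).
rewrite (big_rem x' sx') /= eq_sym xx'.
by exists (\prod_(y <- rem x' s | y != x) (x - y)); ring.
Qed.

End Comaximal.

Lemma codes_sub_ndivides (S : idomainType) (e g k d x x' y : S) :
  codes e g k d x y -> codes e g k d x' y -> ~ divides (x - x') d.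
Proof.
move=> [qNd [w1 Hw1]] [_ [w2 Hw2]] sub_d; apply/qNd/(divides_trans _ sub_d).
have -> : x - x' = (x - e) - (x' - e) by ring.
by exists (w1 - w2); rewrite Hw1 Hw2; ring.
Qed.

Section Coding.
Variable S : idomainType.
Hypotheses (S_infinite : infinite_type S) (S_cond1 : cond1 S) (S_cond2 : cond2 S).

Lemma coding_parameters (s : seq S) (f : S -> S) :
  uniq s -> {in s &, injective f} ->
  exists e g k d,
    (forall x, x \in s -> codes e g k d x (f x)) /\
    (forall x x' y, x \in s -> x' \in s ->
       codes e g k d x y -> codes e g k d x' y -> x = x').
Proof.
move=> s_uniq f_inj.
have [d d_neq0 d_diff] := exists_differences_multiple s.
have [m [[m_neq0 mNU] _]] := S_cond1 [::].
have dm_nzNU : nonzero_nonunit (d * m).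
  by split; rewrite ?mulf_neq0 // unitrM negb_and mNU orbT.
have [z zNfs] := S_infinite (map f s).
have shift_neq0 : 0 \notin [seq f x - z | x <- s].
  apply/mapP=> -[x sx /eqP]; rewrite eq_sym subr_eq0 => /eqP fxz.
  by case/negP: zNfs; rewrite -fxz map_f.
have [g [g_nzNU g_comax]] := S_cond2 shift_neq0 dm_nzNU.
pose q x := 1 + (f x - z) * g.
have [e e_crt] : exists e, forall x, x \in s -> divides (q x) (x - e).
  apply: chinese_seq => // x x' sx sx' xx'.
  apply: g_comax; [exact: map_f | exact: map_f |].
  by apply: contra_neq xx' => /addIr /f_inj; apply.
exists e, g, (- z), d; split=> [x sx|x x' y sx sx' cx cx'].
  have [[_ qNU] dm_comax] := g_nzNU _ (map_f (fun x => f x - z) sx).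
  by split; [exact: comaximal_ndivides dm_comax qNU | exact: e_crt].
have [//|xx'] := eqVneq x x'.
by case: (codes_sub_ndivides cx cx'); exact: d_diff.
Qed.

End Coding.

Section Expansion.
Variables (S : idomainType) (F Rl : Type).
Variables (fI : F -> seq S -> S) (rI : Rl -> seq S -> Prop).

Lemma models_Psi_card_le (A B : S -> Prop) :
  models fI rI A B (Psi F Rl) -> card_le A B.
Proof.
case/models_PsiE=> [AB|[e [g [k [d [codes_total codes_inj]]]]]]; first by exists id.
exact: card_le_rel codes_total codes_inj.
Qed.

Lemma card_le_models_Psi (A B : S -> Prop) :
  infinite_type S -> cond1 S -> cond2 S ->
  finite_set A -> card_le A B -> models fI rI A B (Psi F Rl).
Proof.
move=> S_inf S_cond1 S_cond2 [s As] [f [fAB f_inj]].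
have Aundup x : A x <-> x \in undup s by rewrite mem_undup.
have [|e [g [k [d [codes_f codes_inj]]]]] :=
  coding_parameters S_inf S_cond1 S_cond2 (undup_uniq s) (f := f).
  by move=> x x' /Aundup Ax /Aundup Ax'; exact: f_inj.
apply/models_PsiE; right; exists e, g, k, d.
split=> [x /Aundup sx|x x' y /Aundup sx /Aundup sx' _].
  by exists (f x); split; [exact/fAB/Aundup | exact: codes_f].
exact: codes_inj.
Qed.

End Expansion.

Theorem lemma2p6 (S : idomainType) (F Rl : Type)
    (fI : F -> seq S -> S) (rI : Rl -> seq S -> Prop) :
  infinite_type S -> cond1 S -> cond2 S ->
  exists Psi : formula F Rl, sentence Psi /\
    (forall A B : S -> Prop, (forall x, A x -> B x) -> models fI rI A B Psi) /\
    (forall A B : S -> Prop, finite_set A ->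
        (models fI rI A B Psi <-> card_le A B)) /\
    (forall A B : S -> Prop, ~ finite_set A -> finite_set B ->
        ~ models fI rI A B Psi).
Proof.
move=> S_inf S_cond1 S_cond2; exists (Psi F Rl); split; first exact: Psi_sentence.
split; first by move=> A B AB; apply/models_PsiE; left.
split=> [A B A_fin|A B A_inf B_fin /models_Psi_card_le AB].
  by split; [exact: models_Psi_card_le | exact: card_le_models_Psi].
exact/A_inf/(card_le_finite AB).
Qed.
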